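(* Let $C\ge0$. If a knowledge state algorithm $\mathcal A$ is $C$-competitive as a knowledge state algorithm, then $\mathcal A$ is $C$-competitive, i.e. there is a constant $K$ with $E(\mathrm{cost}_{\mathcal A}(\varrho))\le C\cdot\mathrm{cost}_{\mathrm{opt}}(\varrho)+K$ for every finite request sequence $\varrho$.
   Context: Online problem: a set $\mathcal X$ of states, a set $\mathcal R$ of requests, a start state $s^0$, a function $d:\mathcal X\times\mathcal X\to[0,\infty)$ with $d(x,x)=0$ and $d(x,z)\le d(x,y)+d(y,z)$, and $\mathrm{cost}:\mathcal X\times\mathcal R\times\mathcal X\to[0,\infty)$ with $\mathrm{cost}(u,r,v)\le d(u,x)+\mathrm{cost}(x,r,y)+d(y,v)$. For $\varrho=r^1\dots r^n$, $\mathrm{cost}_{\mathrm{opt}}(\varrho)$ is the infimum of $\sum_{t=1}^n\mathrm{cost}(x^{t-1},r^t,x^t)$ over all $x^1,\dots,x^n$ with $x^0=s^0$. $\Pi$ is the set of finitely supported probability distributions on $\mathcal X$; $\mathrm{cost}(\pi,r,\pi')$ is the minimum transportation cost $\min_\gamma\sum_{x,y}\gamma(x,y)\mathrm{cost}(x,r,y)$ over distributions $\gamma$ on $\mathrm{supp}(\pi)\times\mathrm{supp}(\pi')$ with marginals $\pi,\pi'$. An estimator is a function $\omega:\mathcal X\to[0,\infty)$ with $\omega(y)\le\omega(x)+d(x,y)$ for all $x,y$. The update operator is $(\omega\wedge r)(y)=\inf_{x\in\mathcal X}\{\omega(x)+\mathrm{cost}(x,r,y)\}$. Knowledge state algorithm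 $\mathcal A$: a knowledge state is a pair $k=(\pi,\omega)$ with $\pi\in\Pi$ and $\omega$ an estimator. The initial knowledge state is $k^0=(s^0,\omega^0)$ with $\omega^0$ an estimator satisfying $\omega^0(s^0)=0$ (e.g. $\omega^0=d(s^0,\cdot)$). For each knowledge state $k=(\pi,\omega)$ and request $r$, $\mathcal A$ specifies finitely many subsequent knowledge states $k_i=(\pi_i,\omega_i)$ with weights $\lambda_i>0$, $\sum_i\lambda_i=1$, and a real number $\mathrm{adjust}_{\mathcal A}(k,r)$ such that $(\omega\wedge r)(x)\ge\mathrm{adjust}_{\mathcal A}(k,r)+\sum_i\lambda_i\omega_i(x)$ for all $x\in\mathcal X$. On request sequence $r^1\dots r^n$, $k^t$ is chosen among the subsequents of $(k^{t-1},r^t)$, equal to $k_i$ with probability $\lambda_i$. Step cost $\mathrm{cost}_{\mathcal A}(k,r)=\mathrm{cost}(\pi,r,\sum_i\lambda_i\pi_i)$; $\mathrm{cost}_{\mathcal A}(\varrho)=\sum_t\mathrm{cost}_{\mathcal A}(k^{t-1},r^t)$ and $\mathrm{adjust}_{\mathcal A}(\varrho)=\sum_t\mathrm{adjust}_{\mathcal A}(k^{t-1},r^t)$. Writing $k^n=(\pi^n,\omega^n)$, $\mathcal A$ is $C$-competitive as a knowledge state algorithm if there is a constant $K$ with $E(\mathrm{cost}_{\mathcal A}(\varrho))\le C\cdot E(\mathrm{adjust}_{\mathcal A}(\varrho)+\omega^n(x))+K$ for every request sequence $\varrho=r^1\dots r^n$ and every $x\in\mathcal X$. *)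

From HB Require Import structures.
From mathcomp Require Import all_boot all_order all_algebra.
From mathcomp Require Import boolp classical_sets reals.
Set Implicit Arguments.
Unset Strict Implicit.
Unset Printing Implicit Defensive.
Import Order.TTheory GRing.Theory Num.Theory.
Local Open Scope ring_scope.
Local Open Scope classical_set_scope.

Section KnowledgeStates.
Variables (R : realType) (X : choiceType) (Req : Type) (s0 : X).
Variables (d : X -> X -> R) (cost : X -> Req -> X -> R).

Record dist := Dist {
  dsupp : seq X;
  dw : X -> R;
  dsupp_uniq : uniq dsupp;
  dw_out : forall x, x \notin dsupp -> dw x = 0;
  dw_ge0 : forall x, 0 <= dw x;
  dw_sum1 : \sum_(x <- dsupp) dw x = 1 }.

(* Minimum transportation cost between (s,p) and (s',p') under request r
   (written as an infimum; the minimum is attained). *)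
Definition tcost (s : seq X) (p : X -> R) (r : Req) (s' : seq X) (p' : X -> R) : R :=
  inf [set c | exists gamma : X -> X -> R,
        [/\ forall x y, 0 <= gamma x y,
            forall x, x \in s -> \sum_(y <- s') gamma x y = p x,
            forall y, y \in s' -> \sum_(x <- s) gamma x y = p' y &
            c = \sum_(x <- s) \sum_(y <- s') gamma x y * cost x r y]].

Record estimator := Estimator {
  est :> X -> R;
  est_ge0 : forall x, 0 <= est x;
  est_lip : forall x y, est y <= est x + d x y }.

Definition update (om : X -> R) (r : Req) (y : X) : R :=
  inf [set om x + cost x r y | x in [set: X]].

Definition kstate := (dist * estimator)%type.

Record ksa := KSA {
  ks_next : kstate -> Req -> seq (R * kstate);
  ks_adjust : kstate -> Req -> R;
  ks_om0 : estimator }.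

Definition ksa_valid (A : ksa) : Prop :=
  [/\ ks_om0 A s0 = 0,
      forall k r, all (fun p => 0 < p.1) (ks_next A k r),
      forall k r, \sum_(p <- ks_next A k r) p.1 = 1 &
      forall k r x, update k.2 r x >=
        ks_adjust A k r + \sum_(p <- ks_next A k r) p.1 * p.2.2 x].

Lemma dirac_out x : x \notin [:: s0] -> (if x == s0 then 1 else 0 : R) = 0.
Proof. by rewrite inE; case: eqP. Qed.
Lemma dirac_ge0 x : 0 <= (if x == s0 then 1 else 0 : R).
Proof. by case: eqP. Qed.
Lemma dirac_sum : \sum_(x <- [:: s0]) (if x == s0 then 1 else 0 : R) = 1.
Proof. by rewrite big_seq1 eqxx. Qed.
Definition dirac0 : dist :=
  @Dist [:: s0] (fun x => if x == s0 then 1 else 0) erefl dirac_out dirac_ge0 dirac_sum.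

Definition k0 (A : ksa) : kstate := (dirac0, ks_om0 A).

(* cost_A(k, r) = cost(pi, r, sum_i lambda_i pi_i) *)
Definition mix_supp (l : seq (R * kstate)) : seq X :=
  undup (flatten [seq dsupp p.2.1 | p <- l]).
Definition mix_w (l : seq (R * kstate)) (y : X) : R :=
  \sum_(p <- l) p.1 * dw p.2.1 y.
Definition costA (A : ksa) (k : kstate) (r : Req) : R :=
  tcost (dsupp k.1) (dw k.1) r (mix_supp (ks_next A k r)) (mix_w (ks_next A k r)).

Fixpoint paths (A : ksa) (k : kstate) (rho : seq Req) : seq (R * seq kstate) :=
  match rho with
  | [::] => [:: (1, [::])]
  | r :: rho' => flatten [seq [seq (p.1 * q.1, p.2 :: q.2) | q <- paths A p.2 rho']
                         | p <- ks_next A k r]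
  end.

Fixpoint traj_cost (A : ksa) (k : kstate) (rho : seq Req) (tr : seq kstate) : R :=
  match rho, tr with
  | r :: rho', k' :: tr' => costA A k r + traj_cost A k' rho' tr'
  | _, _ => 0
  end.

Fixpoint traj_adjust (A : ksa) (k : kstate) (rho : seq Req) (tr : seq kstate) : R :=
  match rho, tr with
  | r :: rho', k' :: tr' => ks_adjust A k r + traj_adjust A k' rho' tr'
  | _, _ => 0
  end.

Definition Exp (A : ksa) (rho : seq Req) (f : seq kstate -> R) : R :=
  \sum_(q <- paths A (k0 A) rho) q.1 * f q.2.

Definition E_costA (A : ksa) (rho : seq Req) : R :=
  Exp A rho (traj_cost A (k0 A) rho).

Definition E_adjust_final (A : ksa) (rho : seq Req) (x : X) : R :=
  Exp A rho (fun tr => traj_adjust A (k0 A) rho tr + (last (k0 A) tr).2 x).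

Fixpoint path_cost (x : X) (rho : seq Req) (xs : seq X) : R :=
  match rho, xs with
  | r :: rho', y :: xs' => cost x r y + path_cost y rho' xs'
  | _, _ => 0
  end.
Definition cost_opt (rho : seq Req) : R :=
  inf [set path_cost s0 rho xs | xs in [set xs : seq X | size xs = size rho]].

Definition ks_competitive (A : ksa) (C : R) : Prop :=
  exists K : R, forall (rho : seq Req) (x : X),
    E_costA A rho <= C * E_adjust_final A rho x + K.

Definition competitive (A : ksa) (C : R) : Prop :=
  exists K : R, forall rho : seq Req, E_costA A rho <= C * cost_opt rho + K.

End KnowledgeStates.

(* Fix any offline trajectory s0 = x^0, x^1, ..., x^n.  The defining inequality of a
   knowledge state algorithm, combined with (omega /\ r)(y) <= omega(x) + cost(x, r, y),
   shows by backward induction on the request sequence that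
   E(adjust_A(rho) + omega^n(x^n)) <= omega^0(s0) + sum_t cost(x^{t-1}, r^t, x^t),
   and omega^0(s0) = 0.  Knowledge-state competitiveness at the point x = x^n therefore
   bounds E(cost_A(rho)) by C times the cost of every trajectory plus K, hence by
   C * cost_opt(rho) + K after taking the infimum. *)
From mathcomp Require Import all_boot all_order all_algebra.
From mathcomp Require Import boolp classical_sets reals.
Set Implicit Arguments.
Unset Strict Implicit.
Unset Printing Implicit Defensive.
Import Order.TTheory GRing.Theory Num.Theory.
Local Open Scope ring_scope.
Local Open Scope classical_set_scope.

Lemma ler_pM_inf (R : realType) (S : set R) (C K a : R) :
  0 <= C -> S !=set0 -> (forall z, S z -> a <= C * z + K) -> a <= C * inf S + K.
Proof.
move=> C0 [z0 Sz0] aS; have [C_eq0|Cneq0] := eqVneq C 0.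
  by move: (aS _ Sz0); rewrite C_eq0 !mul0r.
have Cgt0 : 0 < C by rewrite lt_def Cneq0 C0.
rewrite -lerBlDr -ler_pdivrMl //; apply: lb_le_inf; first by exists z0.
by move=> z Sz; rewrite ler_pdivrMl // lerBlDr; exact: aS.
Qed.

Lemma ler_sum_all (R : numDomainType) (T : Type) (P : pred T) (l : seq T)
    (F G : T -> R) :
  all P l -> (forall p, P p -> F p <= G p) -> \sum_(p <- l) F p <= \sum_(p <- l) G p.
Proof.
elim: l => [|a l IH] /=; first by rewrite !big_nil.
by case/andP=> Pa Pl FG; rewrite !big_cons lerD ?FG ?IH.
Qed.

Section KnowledgeStateBound.
Variables (R : realType) (X : choiceType) (Req : Type) (s0 : X).
Variables (d : X -> X -> R) (cost : X -> Req -> X -> R).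
Hypothesis cost_ge0 : forall x r y, 0 <= cost x r y.

(* cost_ge0 bounds the set below; otherwise [inf] would be a junk value. *)
Lemma update_le (om : estimator d) r x y : update cost om r y <= om x + cost x r y.
Proof.
apply: ge_inf; last by exists x.
by exists 0 => _ [z _ <-]; rewrite addr_ge0 ?est_ge0.
Qed.

Variable A : ksa Req d.
Hypothesis A_valid : ksa_valid s0 cost A.

Lemma paths_weight_sum k rho : \sum_(q <- paths A k rho) q.1 = 1.
Proof.
elim: rho k => [|r rho IH] k /=; first by rewrite big_seq1.
have [_ _ next_sum1 _] := A_valid.
rewrite big_flatten big_map -(next_sum1 k r); apply: eq_bigr => p _.
by rewrite big_map -mulr_sumr IH mulr1.
Qed.

Lemma exp_adjust_final_le_path_cost k rho x0 xs : size xs = size rho ->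
  \sum_(q <- paths A k rho) q.1 *
     (traj_adjust A k rho q.2 + (last k q.2).2 (last x0 xs))
  <= k.2 x0 + path_cost cost x0 rho xs.
Proof.
elim: rho k x0 xs => [|r rho IH] k x0 [|y xs] //=.
  by move=> _; rewrite big_seq1 /= mul1r add0r addr0.
case=> size_xs; have [_ next_pos next_sum1 next_update] := A_valid.
rewrite big_flatten big_map /=.
have step_le (p : R * kstate d) : 0 < p.1 ->
    \sum_(q <- paths A p.2 rho) p.1 * q.1 *
      (ks_adjust A k r + traj_adjust A p.2 rho q.2 + (last p.2 q.2).2 (last y xs))
    <= p.1 * (ks_adjust A k r + (p.2.2 y + path_cost cost y rho xs)).
  move=> /ltW p_ge0.
  under eq_bigr => q _ do rewrite -mulrA -addrA mulrDr.
  rewrite -mulr_sumr big_split /= -mulr_suml paths_weight_sum mul1r.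
  by rewrite ler_wpM2l // lerD2l IH.
apply: (le_trans (y := \sum_(p <- ks_next A k r)
    p.1 * (ks_adjust A k r + (p.2.2 y + path_cost cost y rho xs)))).
  by apply: ler_sum_all (next_pos k r) _ => p /step_le; rewrite big_map.
under eq_bigr => p _ do rewrite !mulrDr.
rewrite !big_split /= -!mulr_suml next_sum1 !mul1r addrA addrA lerD2r.
by apply: le_trans (update_le _ r x0 y); exact: next_update.
Qed.

End KnowledgeStateBound.

Theorem mainTheorem7 (R : realType) (X : choiceType) (Req : Type) (s0 : X)
  (d : X -> X -> R) (cost : X -> Req -> X -> R)
  (d_ge0 : forall x y, 0 <= d x y)
  (d_refl : forall x, d x x = 0)
  (d_tri : forall x y z, d x z <= d x y + d y z)
  (cost_ge0 : forall x r y, 0 <= cost x r y)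
  (cost_tri : forall u x r y v, cost u r v <= d u x + cost x r y + d y v)
  (A : ksa Req d) (C : R) :
  0 <= C ->
  ksa_valid s0 cost A ->
  ks_competitive s0 cost A C ->
  competitive s0 cost A C.
Proof.
move=> C_ge0 A_valid [K A_ks_comp]; exists K => rho.
apply: ler_pM_inf => //.
  by exists (path_cost cost s0 rho (nseq (size rho) s0)), (nseq (size rho) s0);
    rewrite //= size_nseq.
move=> _ [xs size_xs <-]; apply: le_trans (A_ks_comp rho (last s0 xs)) _.
rewrite lerD2r ler_wpM2l //.
have [om0_s0 _ _ _] := A_valid.
have := exp_adjust_final_le_path_cost cost_ge0 A_valid (k0 s0 A) s0 size_xs.
by rewrite /= om0_s0 add0r.
Qed.
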